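(* Let $r>0$, assume $W$ satisfies (H), and let $u_0(x)=1$ for $x>0$, $u_0(x)=-1$ for $x<0$ (so $\mathcal{E}(u_0)=4/r$). If either $r\in\big(0,\frac{4}{4+c_W}\big)$, or $W$ is differentiable at $\pm1$, then there exists a monotone nondecreasing $v\in L^\infty(\mathbb{R})$ with $\lim_{x\to\pm\infty}v(x)=\pm1$ and $\mathcal{E}(v)<\mathcal{E}(u_0)$; in particular $u_0$ is not a minimizer of $\mathcal{E}$ among monotone nondecreasing functions connecting $-1$ to $1$.
   Context: For an interval $I$ and $u\in L^\infty(I)$, $\operatorname{osc}_I u:=\operatorname{ess\,sup}_I u-\operatorname{ess\,inf}_I u$. $\mathcal{E}(u):=\frac1{2r^2}\int_{\mathbb{R}}(\operatorname{osc}_{(x-r,x+r)}u)^2dx+\int_{\mathbb{R}}W(u(x))dx$. Assumption (H) on $W$: $W\in C(\mathbb{R})$, $W(-1)=W(1)=0<W(t)$ for $t\ne\pm1$; $W$ strictly decreasing on $(-\infty,-1)$, strictly increasing on $(1,+\infty)$; $W$ even on $[-1,1]$ with unique local maximum in $[-1,1]$ at $0$. $c_W:=\int_{-1}^1 W(s)\,ds$. *)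

From Stdlib Require Import Reals Lra ClassicalEpsilon.
Open Scope R_scope.

(* Lebesgue-null subset of R: coverable by countably many open intervals
   of arbitrarily small total length. *)
Definition null_set (A : R -> Prop) : Prop :=
  forall eps, 0 < eps ->
    exists a b : nat -> R,
      (forall n, a n <= b n) /\
      (forall x, A x -> exists n, a n < x /\ x < b n) /\
      (forall N, sum_f_R0 (fun n => b n - a n) N <= eps).

Definition is_glb (S : R -> Prop) (m : R) : Prop :=
  (forall c, S c -> m <= c) /\
  (forall m', (forall c, S c -> m' <= c) -> m' <= m).

Definition is_esssup (u : R -> R) (a b M : R) : Prop :=
  is_glb (fun c => null_set (fun x => a < x /\ x < b /\ c < u x)) M.

Definition esssup (u : R -> R) (a b : R) : R :=
  epsilon (inhabits 0) (is_esssup u a b).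

Definition essinf (u : R -> R) (a b : R) : R :=
  - esssup (fun x => - u x) a b.

Definition osc (u : R -> R) (a b : R) : R := esssup u a b - essinf u a b.

Definition energy_density (W : R -> R) (r : R) (u : R -> R) (x : R) : R :=
  (osc u (x - r) (x + r)) ^ 2 / (2 * r ^ 2) + W (u x).

(* E is the (finite) value of the energy of u: the nonnegative integrand is
   Riemann integrable on every [-n,n] and E = sup_n of these integrals
   (= the integral over R). *)
Definition has_energy (W : R -> R) (r : R) (u : R -> R) (E : R) : Prop :=
  exists pr : forall n : nat,
      Riemann_integrable (energy_density W r u) (- INR n) (INR n),
    is_lub (fun y => exists n, y = RiemannInt (pr n)) E.

Definition is_local_max_on_m11 (W : R -> R) (t : R) : Prop :=
  -1 <= t <= 1 /\
  exists delta, 0 < delta /\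
    forall s, -1 <= s <= 1 -> Rabs (s - t) < delta -> W s <= W t.

Definition hyp_H (W : R -> R) : Prop :=
  continuity W /\
  W (-1) = 0 /\ W 1 = 0 /\
  (forall t, t <> 1 -> t <> -1 -> 0 < W t) /\
  (forall s t, s < t -> t < -1 -> W t < W s) /\
  (forall s t, 1 < s -> s < t -> W s < W t) /\
  (forall t, -1 <= t <= 1 -> W (- t) = W t) /\
  is_local_max_on_m11 W 0 /\
  (forall t, is_local_max_on_m11 W t -> t = 0).

Definition u0 (x : R) : R := if Rlt_dec 0 x then 1 else -1.

From Stdlib Require Import Reals Lra Lia List Classical ClassicalEpsilon.
From Coquelicot Require Import Coquelicot.
Open Scope R_scope.

(* Replace the jump of u0 by a plateau of height t on [0, r). A nondecreasing
   three-step profile of this kind has energy (3 + t^2)/r + r W(t), while u0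
   (the case t = 1) has energy 4/r, so it suffices to find t in (-1, 1) with
   r^2 W(t) < 1 - t^2. If no such t existed, integrating over (-1, 1) would
   give c_W >= 4/(3 r^2), contradicting r < 4/(4 + c_W); if W is
   differentiable at the well 1 then W'(1) = 0, and t = 1 - h works for
   small h > 0. *)

Definition total_length (l : list (R * R)) : R :=
  fold_right (fun i s => snd i - fst i + s) 0 l.

Lemma total_length_app l1 l2 :
  total_length (l1 ++ l2) = total_length l1 + total_length l2.
Proof. induction l1 as [|i l1 IH]; simpl; [ring | rewrite IH; ring]. Qed.

Lemma total_length_nonneg l :
  (forall i, In i l -> fst i <= snd i) -> 0 <= total_length l.
Proof.
  induction l as [|i l IH]; simpl; intros Hl; [lra|].
  assert (fst i <= snd i) by (apply Hl; auto).
  assert (0 <= total_length l) by (apply IH; auto). lra.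
Qed.

Lemma total_length_seq (a b : nat -> R) N :
  total_length (map (fun n => (a n, b n)) (seq 0 (S N)))
  = sum_f_R0 (fun n => b n - a n) N.
Proof.
  induction N as [|N IH]; [simpl; ring|].
  rewrite seq_S, map_app, total_length_app, IH. simpl. ring.
Qed.

(* Remove the interval containing the right end point [x] and recurse on
   [p, left end of that interval]. *)
Lemma segment_length_le_total_length l p x :
  (forall i, In i l -> fst i <= snd i) -> p <= x ->
  (forall y, p <= y <= x -> exists i, In i l /\ fst i < y < snd i) ->
  x - p <= total_length l.
Proof.
  remember (length l) as n eqn:Hn. revert l Hn x.
  induction n as [n IH] using (well_founded_induction Wf_nat.lt_wf); intros l Hn x Hl Hpx Hcov.
  destruct (Hcov x) as [i [Hi Hix]]; [lra|].
  destruct (in_split _ _ Hi) as [l1 [l2 ->]].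
  assert (Hl' : forall j, In j (l1 ++ l2) -> fst j <= snd j).
  { intros j Hj. apply Hl. apply in_app_or in Hj. apply in_or_app. simpl. tauto. }
  assert (H12 := total_length_nonneg _ Hl').
  rewrite total_length_app in *. simpl.
  destruct (Rlt_le_dec (fst i) p) as [Hlt|Hge]; [lra|].
  assert (IHi : fst i - p <= total_length (l1 ++ l2)).
  { apply (IH (length (l1 ++ l2))); auto.
    - rewrite Hn, !length_app. simpl. lia.
    - intros y Hy. destruct (Hcov y) as [j [Hj Hjy]]; [lra|].
      exists j. split; [|exact Hjy].
      apply in_app_or in Hj. apply in_or_app.
      destruct Hj as [Hj|[<-|Hj]]; auto. lra. }
  rewrite total_length_app in IHi. lra.
Qed.

(* Heine-Borel for [p, q]: the supremum of the points up to which a finite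
   subfamily suffices cannot lie strictly inside the segment. *)
Lemma segment_finite_subcover (a b : nat -> R) p q : p <= q ->
  (forall y, p <= y <= q -> exists n, a n < y < b n) ->
  exists N, forall y, p <= y <= q -> exists n, (n <= N)%nat /\ a n < y < b n.
Proof.
  intros Hpq Hcov.
  set (A := fun x => p <= x <= q /\ exists N, forall y, p <= y <= x ->
                       exists n, (n <= N)%nat /\ a n < y < b n).
  assert (Ap : A p).
  { split; [lra|]. destruct (Hcov p) as [n Hn]; [lra|].
    exists n. intros y Hy. exists n. split; [lia|]. replace y with p by lra. exact Hn. }
  assert (HA : bound A) by (exists q; intros x [Hx _]; lra).
  destruct (completeness A HA (ex_intro _ p Ap)) as [s [Hs_ub Hs_lub]].
  assert (Hps : p <= s) by (apply Hs_ub; exact Ap).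
  assert (Hsq : s <= q) by (apply Hs_lub; intros x [Hx _]; lra).
  destruct (Hcov s) as [m Hm]; [lra|].
  destruct (classic (exists x, A x /\ a m < x)) as [[x [Ax Hxm]]|Hnone].
  2:{ exfalso. assert (s <= a m); [|lra]. apply Hs_lub. intros x Ax.
      destruct (Rle_lt_dec x (a m)); auto. exfalso; eauto. }
  assert (Hxs : x <= s) by (apply Hs_ub; exact Ax).
  destruct Ax as [_ [N HN]].
  set (z := Rmin q ((s + b m) / 2)).
  assert (Az : A z).
  { split; [unfold z, Rmin; destruct (Rle_dec q ((s + b m) / 2)); lra|].
    exists (Nat.max N m). intros y Hy.
    destruct (Rle_lt_dec y x).
    - destruct (HN y) as [n [Hn1 Hn2]]; [lra|]. exists n; split; [lia|exact Hn2].
    - exists m; split; [lia|].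
      assert (z <= (s + b m) / 2) by apply Rmin_r. lra. }
  assert (Hzs : z <= s) by (apply Hs_ub; exact Az).
  assert (Hzq : z = q) by (unfold z, Rmin in *; destruct (Rle_dec q ((s + b m) / 2)); lra).
  rewrite Hzq in Az. destruct Az as [_ HNq]. exact HNq.
Qed.

Lemma interval_not_null p q : p < q -> ~ null_set (fun x => p < x < q).
Proof.
  intros Hpq Hnull.
  destruct (Hnull ((q - p) / 4)) as [a [b [Hab [Hcov Hsum]]]]; [lra|].
  destruct (segment_finite_subcover a b (p + (q - p) / 4) (q - (q - p) / 4))
    as [N HN]; [lra| intros y Hy; apply Hcov; lra |].
  assert (Hlen : (q - (q - p) / 4) - (p + (q - p) / 4)
                 <= total_length (map (fun n => (a n, b n)) (seq 0 (S N)))).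
  { apply segment_length_le_total_length; [| lra |].
    - intros i Hi. apply in_map_iff in Hi. destruct Hi as [n [<- _]]. apply Hab.
    - intros y Hy. destruct (HN y Hy) as [n [Hn1 Hn2]].
      exists (a n, b n). split; [|exact Hn2].
      apply in_map_iff. exists n. split; [reflexivity|]. apply in_seq. lia. }
  rewrite total_length_seq in Hlen. specialize (Hsum N). lra.
Qed.

Lemma null_set_incl (A B : R -> Prop) :
  (forall x, A x -> B x) -> null_set B -> null_set A.
Proof.
  intros HAB HB eps Heps. destruct (HB eps Heps) as [a [b [Hab [Hcov Hsum]]]].
  exists a, b. split; [exact Hab | split; [|exact Hsum]].
  intros x Ax. apply Hcov, HAB, Ax.
Qed.

Lemma null_set_empty (A : R -> Prop) : (forall x, ~ A x) -> null_set A.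
Proof.
  intros HA eps Heps. exists (fun _ => 0), (fun _ => 0).
  split; [intros; lra | split].
  - intros x Ax. exfalso; exact (HA x Ax).
  - intros N. induction N; simpl; lra.
Qed.

Lemma esssup_attained u a b p q M :
  p < q -> a <= p -> q <= b ->
  (forall x, a < x < b -> u x <= M) -> (forall x, p < x < q -> u x = M) ->
  esssup u a b = M.
Proof.
  intros Hpq Hap Hqb Hle Heq.
  assert (HM : is_esssup u a b M).
  { split.
    - intros c Hc. destruct (Rle_lt_dec M c) as [|Hlt]; auto. exfalso.
      apply (interval_not_null p q Hpq). eapply null_set_incl; [|exact Hc].
      intros x Hx. split; [lra | split; [lra|]]. rewrite (Heq x Hx). exact Hlt.
    - intros m Hm. apply Hm, null_set_empty. intros x [H1 [H2 H3]].
      specialize (Hle x (conj H1 H2)). lra. }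
  assert (Hspec := epsilon_spec (inhabits 0) (is_esssup u a b) (ex_intro _ M HM)).
  fold (esssup u a b) in Hspec.
  destruct Hspec as [Hs_lb Hs_glb], HM as [HM_lb HM_glb].
  apply Rle_antisym; [apply HM_glb | apply Hs_glb]; auto.
Qed.

Lemma essinf_attained u a b p q m :
  p < q -> a <= p -> q <= b ->
  (forall x, a < x < b -> m <= u x) -> (forall x, p < x < q -> u x = m) ->
  essinf u a b = m.
Proof.
  intros Hpq Hap Hqb Hge Heq. unfold essinf.
  rewrite (esssup_attained (fun x => - u x) a b p q (- m)); auto; [ring| |].
  - intros x Hx. specialize (Hge x Hx). lra.
  - intros x Hx. rewrite (Heq x Hx). reflexivity.
Qed.

Lemma osc_nondecreasing u a b p q m M :
  (forall x y, x <= y -> u x <= u y) ->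
  a < q <= b -> a <= p < b ->
  (forall x, a < x < q -> u x = m) -> (forall x, p < x < b -> u x = M) ->
  osc u a b = M - m.
Proof.
  intros Hmono Hq Hp Hm HM.
  assert (Hbounds : forall y, a < y < b -> m <= u y <= M).
  { intros y Hy. split.
    - assert (Hlo : a < Rmin q y) by (apply Rmin_glb_lt; lra).
      assert (Rmin q y <= q /\ Rmin q y <= y) by (split; [apply Rmin_l | apply Rmin_r]).
      rewrite <- (Hm ((a + Rmin q y) / 2)) by lra. apply Hmono. lra.
    - assert (Hhi : Rmax p y < b) by (apply Rmax_lub_lt; lra).
      assert (p <= Rmax p y /\ y <= Rmax p y) by (split; [apply Rmax_l | apply Rmax_r]).
      rewrite <- (HM ((Rmax p y + b) / 2)) by lra. apply Hmono. lra. }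
  unfold osc.
  rewrite (esssup_attained u a b p b M), (essinf_attained u a b a q m); try lra;
    intros x Hx; solve [apply Hbounds; auto | auto].
Qed.

Lemma is_RInt_const_on_open (f : R -> R) (a b k : R) :
  a <= b -> (forall x, a < x < b -> f x = k) -> is_RInt f a b (k * (b - a)).
Proof.
  intros Hab Hk. apply is_RInt_ext with (fun _ => k).
  - intros x Hx. rewrite Rmin_left, Rmax_right in Hx by lra. symmetry; apply Hk; lra.
  - rewrite Rmult_comm. apply (is_RInt_const (V := R_NormedModule)).
Qed.

Lemma is_RInt_three_steps (f : R -> R) (c1 c2 c3 c4 k1 k2 k3 : R) :
  c1 <= c2 -> c2 <= c3 -> c3 <= c4 ->
  (forall x, c1 < x < c2 -> f x = k1) ->
  (forall x, c2 < x < c3 -> f x = k2) ->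
  (forall x, c3 < x < c4 -> f x = k3) ->
  is_RInt f c1 c4 (k1 * (c2 - c1) + k2 * (c3 - c2) + k3 * (c4 - c3)).
Proof.
  intros H12 H23 H34 Hk1 Hk2 Hk3.
  apply (is_RInt_Chasles (V := R_NormedModule)) with c3;
    [apply (is_RInt_Chasles (V := R_NormedModule)) with c2|];
    apply is_RInt_const_on_open; auto.
Qed.

Lemma is_RInt_zero_extension (f : R -> R) (a b c d I : R) :
  c <= a <= b -> b <= d ->
  (forall x, x < a \/ b < x -> f x = 0) ->
  is_RInt f a b I -> is_RInt f c d I.
Proof.
  intros Hcab Hbd Hout HI.
  replace I with (0 * (a - c) + I + 0 * (d - b)) by ring.
  apply (is_RInt_Chasles (V := R_NormedModule)) with b;
    [apply (is_RInt_Chasles (V := R_NormedModule)) with a; [|exact HI]|];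
    apply is_RInt_const_on_open; try lra; intros x Hx; apply Hout; lra.
Qed.

Lemma RInt_subsegment_le (f : R -> R) (a b c d I : R) :
  a <= c <= d -> d <= b -> (forall x, a < x < b -> 0 <= f x) ->
  is_RInt f a b I -> ex_RInt f c d /\ RInt f c d <= I.
Proof.
  intros Hacd Hdb Hpos HI.
  assert (Hab : ex_RInt f a b) by (exists I; exact HI).
  assert (Had : ex_RInt f a d) by (apply (ex_RInt_Chasles_1 (V := R_CompleteNormedModule)) with b; [lra | exact Hab]).
  assert (Hdb' : ex_RInt f d b) by (apply (ex_RInt_Chasles_2 (V := R_CompleteNormedModule)) with a; [lra | exact Hab]).
  assert (Hac : ex_RInt f a c) by (apply (ex_RInt_Chasles_1 (V := R_CompleteNormedModule)) with d; [lra | exact Had]).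
  assert (Hcd : ex_RInt f c d) by (apply (ex_RInt_Chasles_2 (V := R_CompleteNormedModule)) with a; [lra | exact Had]).
  split; [exact Hcd|].
  assert (Hsplit1 := RInt_Chasles (V := R_CompleteNormedModule) f a c d Hac Hcd).
  assert (Hsplit2 := RInt_Chasles (V := R_CompleteNormedModule) f a d b Had Hdb').
  rewrite (is_RInt_unique _ _ _ _ HI) in Hsplit2.
  assert (0 <= RInt f a c) by (apply RInt_ge_0; [lra | exact Hac | intros; apply Hpos; lra]).
  assert (0 <= RInt f d b) by (apply RInt_ge_0; [lra | exact Hdb' | intros; apply Hpos; lra]).
  unfold plus in Hsplit1, Hsplit2; simpl in Hsplit1, Hsplit2. lra.
Qed.

Lemma symmetric_RiemannInt_lub (f : R -> R) (a b I : R) :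
  a <= b -> (forall x, 0 <= f x) -> (forall x, x < a \/ b < x -> f x = 0) ->
  is_RInt f a b I ->
  exists pr : forall n : nat, Riemann_integrable f (- INR n) (INR n),
    is_lub (fun y => exists n, y = RiemannInt (pr n)) I.
Proof.
  intros Hab Hpos Hout HI.
  set (N := Rmax (- a) b).
  assert (Ha : - a <= N) by apply Rmax_l.
  assert (Hb : b <= N) by apply Rmax_r.
  assert (Hbig : forall B, N <= B -> is_RInt f (- B) B I)
    by (intros B HB; apply is_RInt_zero_extension with a b; auto; lra).
  assert (Hsmall : forall n, ex_RInt f (- INR n) (INR n) /\ RInt f (- INR n) (INR n) <= I).
  { intros n. assert (Hn := pos_INR n).
    apply (RInt_subsegment_le f (- (N + INR n)) (N + INR n)); [lra | lra | |].
    - intros x _. apply Hpos.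
    - apply Hbig. lra. }
  exists (fun n => ex_RInt_Reals_0 _ _ _ (proj1 (Hsmall n))). split.
  - intros y [n ->]. rewrite <- RInt_Reals. apply Hsmall.
  - intros c Hc. destruct (INR_unbounded N) as [n Hn].
    apply Hc. exists n. rewrite <- RInt_Reals.
    symmetry. apply is_RInt_unique, Hbig. lra.
Qed.

Lemma energy_density_nonneg W r u x :
  0 < r -> (forall s, 0 <= W s) -> 0 <= energy_density W r u x.
Proof.
  intros Hr HW. unfold energy_density.
  assert (0 <= osc u (x - r) (x + r) ^ 2 / (2 * r ^ 2))
    by (apply Rdiv_le_0_compat; [apply pow2_ge_0 | nra]).
  specialize (HW (u x)). lra.
Qed.

Definition nondecreasing_three_step (t r : R) (u : R -> R) : Prop :=
  (forall x y, x <= y -> u x <= u y) /\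
  (forall x, x < 0 -> u x = -1) /\
  (forall x, 0 < x < r -> u x = t) /\
  (forall x, r < x -> u x = 1).

(* The density is supported in [-r, 2r] and constant on the three pieces
   of length r, where the oscillation is t + 1, 2 and 1 - t. *)
Lemma has_energy_three_step W r t u :
  0 < r -> W (-1) = 0 -> W 1 = 0 -> (forall s, 0 <= W s) ->
  nondecreasing_three_step t r u ->
  has_energy W r u ((3 + t ^ 2) / r + r * W t).
Proof.
  intros Hr Wm1 W1 HW [Hmono [Hneg [Hmid Hpos]]].
  assert (Hosc := fun a b p q m M => osc_nondecreasing u a b p q m M Hmono).
  unfold has_energy.
  replace ((3 + t ^ 2) / r + r * W t) with
    ((t + 1) ^ 2 / (2 * r ^ 2) * (0 - - r) + (2 ^ 2 / (2 * r ^ 2) + W t) * (r - 0)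
     + (1 - t) ^ 2 / (2 * r ^ 2) * (2 * r - r)) by (field; lra).
  apply symmetric_RiemannInt_lub with (- r) (2 * r); try lra;
    [intros x; apply energy_density_nonneg; auto | | apply is_RInt_three_steps; try lra];
    intros x Hx; unfold energy_density.
  - destruct Hx as [Hx|Hx].
    + rewrite (Hosc (x - r) (x + r) (x - r) (x + r) (-1) (-1)), Hneg, Wm1 by
        (lra || intros; apply Hneg; lra). field. lra.
    + rewrite (Hosc (x - r) (x + r) (x - r) (x + r) 1 1), Hpos, W1 by
        (lra || intros; apply Hpos; lra). field. lra.
  - rewrite (Hosc (x - r) (x + r) 0 0 (-1) t), Hneg, Wm1 by
      (lra || intros; solve [apply Hneg; lra | apply Hmid; lra]). field. lra.
  - rewrite (Hosc (x - r) (x + r) r 0 (-1) 1), Hmid by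
      (lra || intros; solve [apply Hneg; lra | apply Hpos; lra]). field. lra.
  - rewrite (Hosc (x - r) (x + r) r r t 1), Hpos, W1 by
      (lra || intros; solve [apply Hmid; lra | apply Hpos; lra]). field. lra.
Qed.

Lemma hyp_H_nonneg W : hyp_H W -> forall s, 0 <= W s.
Proof.
  intros [_ [Wm1 [W1 [Hpos _]]]] s.
  destruct (Req_dec s 1) as [->|H1]; [lra|].
  destruct (Req_dec s (-1)) as [->|Hm1]; [lra|].
  left; apply Hpos; auto.
Qed.

Lemma is_RInt_one_minus_sq : is_RInt (fun s => 1 - s ^ 2) (-1) 1 (4 / 3).
Proof.
  assert (HFTC := is_RInt_derive (V := R_CompleteNormedModule)
                    (fun s => s - s ^ 3 / 3) (fun s => 1 - s ^ 2) (-1) 1).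
  replace (4 / 3) with (minus (1 - 1 ^ 3 / 3) (-1 - (-1) ^ 3 / 3))
    by (unfold minus, plus, opp; simpl; field).
  apply HFTC.
  - intros x _. auto_derive; [auto | field].
  - intros x _. apply continuity_pt_filterlim. reg.
Qed.

Lemma exists_below_parabola_of_small_r W r (pr : Riemann_integrable W (-1) 1) :
  0 < r -> r < 4 / (4 + RiemannInt pr) ->
  exists t, -1 < t < 1 /\ r ^ 2 * W t < 1 - t ^ 2.
Proof.
  intros Hr Hsmall. apply NNPP. intros Hnone.
  assert (Hint : 4 / 3 <= r ^ 2 * RiemannInt pr).
  { apply (is_RInt_le (fun s => 1 - s ^ 2) (fun s => r ^ 2 * W s) (-1) 1);
      [lra | apply is_RInt_one_minus_sq | |].
    - apply (is_RInt_scal (V := R_NormedModule) W (-1) 1 (r ^ 2)).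
      rewrite <- (RInt_Reals W (-1) 1 pr).
      apply (RInt_correct (V := R_CompleteNormedModule)), ex_RInt_Reals_1, pr.
    - intros s Hs. apply Rnot_lt_le. intros Hlt. apply Hnone. exists s. split; [lra | exact Hlt]. }
  set (c := RiemannInt pr) in *.
  assert (Hc : 0 < 4 + c) by nra.
  apply Rmult_lt_compat_r with (r := 4 + c) in Hsmall; [|exact Hc].
  replace (4 / (4 + c) * (4 + c)) with 4 in Hsmall by (field; lra).
  assert (3 * r * (r * (4 + c)) < 3 * r * 4) by (apply Rmult_lt_compat_l; lra).
  nra.
Qed.

Lemma derivable_pt_lim_at_min W c l :
  (forall s, W c <= W s) -> derivable_pt_lim W c l -> l = 0.
Proof.
  intros Hmin Hl.
  exact (deriv_minimum W (c - 1) (c + 1) c (exist _ l Hl)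
           ltac:(lra) ltac:(lra) (fun x _ _ => Hmin x)).
Qed.

Lemma below_linear_of_zero_derivative f x e d :
  f x = 0 -> derivable_pt_lim f x 0 -> 0 < e -> 0 < d ->
  exists h, 0 < h < d /\ f (x - h) < e * h.
Proof.
  intros Hx Hl He Hd.
  destruct (Hl e He) as [delta Hdelta].
  set (h := Rmin delta d / 2).
  assert (Hmin : 0 < Rmin delta d) by (apply Rmin_glb_lt; [apply cond_pos | exact Hd]).
  assert (Rmin delta d <= delta /\ Rmin delta d <= d) by (split; [apply Rmin_l | apply Rmin_r]).
  assert (Hh : 0 < h < d /\ h < delta) by (unfold h; lra).
  specialize (Hdelta (- h) ltac:(lra) ltac:(rewrite Rabs_Ropp, Rabs_right; lra)).
  rewrite Hx, Rminus_0_r, Rminus_0_r in Hdelta. apply Rabs_def2 in Hdelta.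
  exists h. split; [lra|].
  replace (f (x - h)) with (- h * (f (x + - h) / - h)) by (unfold Rminus; field; lra).
  nra.
Qed.

Lemma exists_below_parabola_of_derivable W r l :
  0 < r -> (forall s, 0 <= W s) -> W 1 = 0 -> derivable_pt_lim W 1 l ->
  exists t, -1 < t < 1 /\ r ^ 2 * W t < 1 - t ^ 2.
Proof.
  intros Hr HW W1 Hl.
  assert (Hl0 : l = 0) by (apply (derivable_pt_lim_at_min W 1); [rewrite W1; exact HW | exact Hl]).
  subst l.
  destruct (below_linear_of_zero_derivative W 1 (/ r ^ 2) 1) as [h [Hh Hwh]];
    auto; [apply Rinv_0_lt_compat; nra | lra |].
  exists (1 - h). split; [lra|].
  apply Rmult_lt_compat_l with (r := r ^ 2) in Hwh; [|nra].
  replace (r ^ 2 * (/ r ^ 2 * h)) with h in Hwh by (field; lra).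
  nra.
Qed.

Definition three_step (t r x : R) : R :=
  if Rlt_dec x 0 then -1 else if Rlt_dec x r then t else 1.

Ltac destruct_steps :=
  unfold three_step, u0;
  repeat match goal with |- context [Rlt_dec ?a ?b] => destruct (Rlt_dec a b) end.

Lemma three_step_bounded t r x : -1 <= t <= 1 -> Rabs (three_step t r x) <= 1.
Proof. intros Ht. apply Rabs_le. destruct_steps; lra. Qed.

Lemma three_step_nondecreasing t r :
  0 < r -> -1 <= t <= 1 -> nondecreasing_three_step t r (three_step t r).
Proof.
  intros Hr Ht. repeat split; intros; destruct_steps; lra.
Qed.

Lemma u0_nondecreasing_three_step r : 0 < r -> nondecreasing_three_step 1 r u0.
Proof. intros Hr. repeat split; intros; destruct_steps; lra. Qed.

Theorem proposition1p2 (W : R -> R) (r : R) :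
  0 < r ->
  hyp_H W ->
  ((exists pr : Riemann_integrable W (-1) 1,
       r < 4 / (4 + RiemannInt pr)) \/
   ((exists l, derivable_pt_lim W 1 l) /\ (exists l, derivable_pt_lim W (-1) l))) ->
  exists v : R -> R,
    (forall x y, x <= y -> v x <= v y) /\
    (exists M, forall x, Rabs (v x) <= M) /\
    (forall eps, 0 < eps -> exists X, forall x, X < x -> Rabs (v x - 1) < eps) /\
    (forall eps, 0 < eps -> exists X, forall x, x < X -> Rabs (v x + 1) < eps) /\
    exists Ev E0, has_energy W r v Ev /\ has_energy W r u0 E0 /\ Ev < E0.
Proof.
  intros Hr HW Hcase.
  assert (HWnn := hyp_H_nonneg W HW).
  destruct HW as [_ [Wm1 [W1 _]]].
  assert (Ht : exists t, -1 < t < 1 /\ r ^ 2 * W t < 1 - t ^ 2).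
  { destruct Hcase as [[pr Hpr] | [[l Hl] _]].
    - exact (exists_below_parabola_of_small_r W r pr Hr Hpr).
    - exact (exists_below_parabola_of_derivable W r l Hr HWnn W1 Hl). }
  destruct Ht as [t [Ht Hbelow]].
  destruct (three_step_nondecreasing t r Hr ltac:(lra)) as [Hmono [Hneg [_ Hpos]]].
  exists (three_step t r). split; [exact Hmono | split; [| split; [| split]]].
  - exists 1. intros x. apply three_step_bounded. lra.
  - intros eps Heps. exists r. intros x Hx. rewrite Hpos, Rminus_diag, Rabs_R0; lra.
  - intros eps Heps. exists 0. intros x Hx. rewrite Hneg by lra.
    replace (-1 + 1) with 0 by ring. rewrite Rabs_R0; lra.
  - exists ((3 + t ^ 2) / r + r * W t), ((3 + 1 ^ 2) / r + r * W 1).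
    split; [apply has_energy_three_step, three_step_nondecreasing; auto; lra|].
    split; [apply has_energy_three_step; auto; apply u0_nondecreasing_three_step, Hr|].
    rewrite W1. apply Rmult_lt_reg_l with r; [exact Hr|].
    replace (r * ((3 + t ^ 2) / r + r * W t)) with (3 + t ^ 2 + r ^ 2 * W t) by (field; lra).
    replace (r * ((3 + 1 ^ 2) / r + r * 0)) with 4 by (field; lra).
    lra.
Qed.
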